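(* Let $e^{i\theta(p)}=\frac{\sqrt{1-p^2}}{p}\left(\frac{\sqrt{2}\,p}{1+p}\sqrt{\frac{p}{1-p}}+\frac{p\,i}{1+p}\right)$ (a complex number of modulus one). Then the tuple $(e^{i\theta(p)}p,\sqrt{1-p^2})$ is simulable.
   Context: Let $p\in[0,1]$ be an unknown parameter and let $|p\rangle=\sqrt{p}|0\rangle+\sqrt{1-p}|1\rangle$. For a complex function $h(p)$ write $|f_h\rangle=\frac{1}{\sqrt{1+|h(p)|^2}}(h(p)|0\rangle+|1\rangle)$. A tuple $(k_0(p),k_1(p))$ of complex functions with $|k_0|^2+|k_1|^2=1$ is called simulable if, starting from an unbounded supply of copies of $|p\rangle$, one can produce the single-qubit state $|f_{k_0/k_1}\rangle=k_0(p)|0\rangle+k_1(p)|1\rangle$ (up to a global phase) in finitely many steps with nonzero success probability, where each step applies a unitary transformation or a measurement (in the computational basis) to the current state together with auxiliary qubits; the operations may not depend on $p$. Auxiliary qubits may be other simulable states or constant states $|a_c\rangle=\frac{1}{\sqrt{|a|^2+1}}(a|0\rangle+|1\rangle)$ with $a\in\mathbb{C}$ a constant independent of $p$. *)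

From HB Require Import structures.
From mathcomp Require Import all_boot all_order all_algebra.
From mathcomp Require Import complex.
From mathcomp Require Import reals.
Set Implicit Arguments. Unset Strict Implicit. Unset Printing Implicit Defensive.
Import Order.TTheory GRing.Theory Num.Theory.
Local Open Scope ring_scope.
Local Open Scope complex_scope.

Section QSim.
Variable R : realType.
Local Notation C := (R[i]).

Definition basis (N : nat) := {ffun 'I_N -> bool}.

(* An (unnormalized) N-qubit pure state: amplitudes on the computational basis. *)
Definition qstate (N : nat) := basis N -> C.

(* A single-qubit state as a function of the parameter p: amplitude of |b>. *)
Definition qubit_fun := R -> bool -> C.

Definition p_qubit : qubit_fun :=
  fun p b => if b then (Num.sqrt (1 - p))%:C else (Num.sqrt p)%:C.

Definition const_qubit (a : C) : qubit_fun :=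
  fun _ b => ((Num.sqrt (Normc.normc a ^+ 2 + 1))^-1)%:C * (if b then 1 else a).

Definition tuple_qubit (k0 k1 : R -> C) : qubit_fun :=
  fun p b => if b then k1 p else k0 p.

(* A p-independent operation on the N-qubit register: a matrix U acting on
   all N qubits (amplitude map x |-> sum_y U x y psi y), or a computational
   basis measurement of qubit j with (postselected) outcome b. *)
Inductive op (N : nat) :=
| OpUnitary of (basis N -> basis N -> C)
| OpMeasure of 'I_N & bool.

Definition is_unitary N (U : basis N -> basis N -> C) : Prop :=
  forall x y : basis N, \sum_(z : basis N) (U z x)^* * U z y = (x == y)%:R.

Definition valid_op N (o : op N) : Prop :=
  match o with OpUnitary U => is_unitary U | OpMeasure _ _ => True end.

Definition apply_op N (o : op N) (psi : qstate N) : qstate N :=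
  match o with
  | OpUnitary U => fun x => \sum_(y : basis N) U x y * psi y
  | OpMeasure j b => fun x => if x j == b then psi x else 0
  end.

Fixpoint valid_ops N (ops : seq (op N)) : Prop :=
  match ops with [::] => True | o :: ops' => valid_op o /\ valid_ops ops' end.

(* Run the steps in order (unnormalized branch amplitude: the state along
   the branch of the chosen measurement outcomes). *)
Definition run N (ops : seq (op N)) (psi : qstate N) : qstate N :=
  foldl (fun s o => apply_op o s) psi ops.

Definition product_state N (init : 'I_N -> qubit_fun) (p : R) : qstate N :=
  fun x => \prod_(i < N) init i p (x i).

Definition in01 (p : R) := 0 <= p <= 1.

Definition setbit N (r : basis N) (o : 'I_N) (b : bool) : basis N :=
  [ffun i => if i == o then b else r i].

(* The protocol: N qubits (all copies and auxiliary qubits that are ever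
   used), a finite p-independent sequence of unitaries and computational
   basis measurements (along one branch of outcomes), followed by a final
   computational-basis measurement of all qubits other than the output
   qubit o with outcome r; the output qubit is then in the state
   out(0)|0> + out(1)|1> (unnormalized), which must be nonzero (nonzero
   success probability) and equal to the target up to a global phase. *)
Inductive simulable : (R -> C) -> (R -> C) -> Prop :=
| Simulable_intro (k0 k1 : R -> C) (N : nat) (init : 'I_N -> qubit_fun)
    (ops : seq (op N)) (o : 'I_N) (r : basis N) :
    (forall p, in01 p -> Normc.normc (k0 p) ^+ 2 + Normc.normc (k1 p) ^+ 2 = 1) ->
    (forall i : 'I_N,
        init i = p_qubit
        \/ (exists a : C, init i = const_qubit a)
        \/ (exists k0' k1' : R -> C, simulable k0' k1' /\
              forall p, in01 p -> forall b, init i p b = tuple_qubit k0' k1' p b)) ->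
    valid_ops ops ->
    (forall p, in01 p ->
       let psi := run ops (product_state init p) in
       exists c : C, c != 0 /\
         psi (setbit r o false) = c * k0 p /\
         psi (setbit r o true) = c * k1 p) ->
    simulable k0 k1.

(* e^{i theta(p)} = sqrt(1-p^2)/p * ( sqrt 2 p/(1+p) * sqrt(p/(1-p)) + p i/(1+p) )
   for 0 < p < 1; at the endpoints (where the formula has 0/0) we take its
   continuous extension: i at p = 0 and 1 at p = 1. *)
Definition eitheta (p : R) : C :=
  if (0 < p < 1) then
    ((Num.sqrt (1 - p ^+ 2) / p)%:C) *
    ((Num.sqrt 2 * p / (1 + p) * Num.sqrt (p / (1 - p)))%:C
     + (p / (1 + p))%:C * 'i)
  else if p == 0 then 'i else 1.

End QSim.

From Pilot Require Import Defs.
From mathcomp Require Import all_boot all_order all_algebra.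
From mathcomp Require Import complex.
From mathcomp Require Import reals.
From mathcomp Require Import ring lra.
Set Implicit Arguments. Unset Strict Implicit. Unset Printing Implicit Defensive.
Import Order.TTheory GRing.Theory Num.Theory.
Local Open Scope ring_scope.
Local Open Scope complex_scope.

(* Three copies of |p> suffice.  Write s = sqrt p and t = sqrt (1 - p).  Two-level
   gates mixing |000> with |010>, |100> with |001> (a Hadamard gate) and |100>
   with |111> leave the amplitudes beta s^3 + i alpha s^2 t on |000> and
   2 beta gamma s^2 t + alpha t^3 on |100>.  With beta gamma = alpha the latter is
   alpha t (1 + p), and with beta = sqrt 2 alpha, postselecting the last two qubits
   on |00> leaves the first qubit in alpha sqrt (1 + p) times the target, because
   e^{i theta(p)} p = (sqrt 2 p s + i p t) / sqrt (1 + p) and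
   sqrt (1 - p^2) = sqrt (1 + p) t. *)

Section ComplexFacts.
Variable R : rcfType.

Lemma complex_ext (x y : R[i]) :
  complex.Re x = complex.Re y -> complex.Im x = complex.Im y -> x = y.
Proof. by case: x y => [? ?] [? ?] /= -> ->. Qed.

Lemma normc_sqr (a b : R) : Normc.normc (a +i* b) ^+ 2 = a ^+ 2 + b ^+ 2.
Proof. by rewrite sqr_sqrtr // addr_ge0 ?sqr_ge0. Qed.

End ComplexFacts.

Section TwoLevelUnitary.
Variables (R : realType) (N : nat) (u v : basis N).
Hypothesis uv : u != v.
Local Notation C := (R[i]).

Definition two_level (a b c d : C) : basis N -> basis N -> C :=
  fun x y => if x == u then (if y == u then a else if y == v then b else 0)
             else if x == v then (if y == u then c else if y == v then d else 0)
             else (x == y)%:R.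

Lemma two_level_map (f : C -> C) a b c d x y : f 0 = 0 -> f 1 = 1 ->
  f (two_level a b c d x y) = two_level (f a) (f b) (f c) (f d) x y.
Proof.
by move=> f0 f1; rewrite /two_level; repeat case: ifP => _; rewrite ?f0 //; case: (x == y).
Qed.

Lemma two_level_tr a b c d x y : two_level a b c d y x = two_level a c b d x y.
Proof.
rewrite /two_level; have [->|yu] := eqVneq y u; last have [->|yv] := eqVneq y v.
- by do ?case: ifP.
- by do ?case: ifP.
- rewrite eq_sym; case: ifP => [/eqP->|_]; first by rewrite eq_sym (negbTE yu).
  by case: ifP => [/eqP->|_]; first by rewrite eq_sym (negbTE yv).
Qed.

Lemma sum_two_level a b c d (psi : basis N -> C) x :
  \sum_y two_level a b c d x y * psi y =
  if x == u then a * psi u + b * psi v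
  else if x == v then c * psi u + d * psi v else psi x.
Proof.
have vu : v != u by rewrite eq_sym.
rewrite (bigD1 u) // (bigD1 v) //= /two_level !eqxx (negbTE vu).
have [_|xu] := eqVneq x u; last have [_|xv] := eqVneq x v.
- by rewrite addrA big1 ?addr0 // => y /andP[/negbTE-> /negbTE->]; rewrite mul0r.
- by rewrite addrA big1 ?addr0 // => y /andP[/negbTE-> /negbTE->]; rewrite mul0r.
rewrite !mul0r !add0r (bigD1 x) /= ?xu ?xv // eqxx mul1r big1 ?addr0 //.
by move=> y /andP[_ /negbTE]; rewrite eq_sym => ->; rewrite mul0r.
Qed.

Lemma two_level_unitary a b c d :
  a^*%R * a + c^*%R * c = 1 -> b^*%R * b + d^*%R * d = 1 ->
  a^*%R * b + c^*%R * d = 0 ->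
  Defs.is_unitary (two_level a b c d).
Proof.
move=> col_u col_v col_uv x y.
under eq_bigr do rewrite (@two_level_map Num.conj) ?conjC0 ?conjC1 // two_level_tr.
have col_vu : b^*%R * a + d^*%R * c = 0.
  have := congr1 Num.conj col_uv; rewrite rmorphD !rmorphM /= !conjCK conjC0.
  by rewrite mulrC [c * _]mulrC.
rewrite sum_two_level /two_level !eqxx [v == u]eq_sym (negbTE uv).
have [->|xu] := eqVneq x u; last have [->|xv] := eqVneq x v => //.
- have [_|yu] := eqVneq y u; first exact: col_u.
  have [_|yv] := eqVneq y v; first by rewrite col_uv.
  by rewrite !mulr0 addr0.
- have [->|yu] := eqVneq y u; first by rewrite eq_sym (negbTE uv) col_vu.
  have [_|yv] := eqVneq y v; first exact: col_v.
  by rewrite !mulr0 addr0.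
Qed.

End TwoLevelUnitary.

Section ThreeQubitProtocol.
Variable R : realType.

Definition bits3 (x0 x1 x2 : bool) : basis 3 :=
  [ffun i : 'I_3 => nth false [:: x0; x1; x2] i].

Lemma eq_bits3 x0 x1 x2 y0 y1 y2 :
  (bits3 x0 x1 x2 == bits3 y0 y1 y2) = [&& x0 == y0, x1 == y1 & x2 == y2].
Proof.
apply/eqP/and3P => [/ffunP E | [/eqP-> /eqP-> /eqP->] //].
by split; apply/eqP; [move: (E ord0) | move: (E (inord 1)) | move: (E (inord 2))];
  rewrite !ffunE ?inordK.
Qed.

Lemma setbit_bits3 b : setbit (bits3 false false false) ord0 b = bits3 b false false.
Proof. by apply/ffunP => i; rewrite !ffunE; case: i => -[|[|[|]]]. Qed.

Lemma product_state_bits3 (init : qubit_fun R) p x0 x1 x2 :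
  product_state (fun=> init) p (bits3 x0 x1 x2) = init p x0 * init p x1 * init p x2.
Proof. by rewrite /product_state !big_ord_recl big_ord0 !ffunE mulr1 mulrA. Qed.

Local Notation b000 := (bits3 false false false).
Local Notation b100 := (bits3 true false false).
Local Notation b010 := (bits3 false true false).
Local Notation b001 := (bits3 false false true).
Local Notation b111 := (bits3 true true true).

Definition protocol (al be ga : R) : seq (op R 3) :=
  [:: OpUnitary (two_level b000 b010 be%:C (0 +i* al) (0 +i* al) be%:C);
      OpUnitary (two_level b100 b001 ga%:C ga%:C ga%:C (- ga)%:C);
      OpUnitary (two_level b100 b111 be%:C al%:C al%:C (- be)%:C)].

Lemma run_protocol al be ga p :
  let s := Num.sqrt p in let t := Num.sqrt (1 - p) in
  let psi := run (protocol al be ga) (product_state (fun=> @p_qubit R) p) in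
  psi b000 = (be * s ^+ 3) +i* (al * s ^+ 2 * t) /\
  psi b100 = (2 * be * ga * s ^+ 2 * t + al * t ^+ 3)%:C.
Proof.
rewrite /run /= !sum_two_level ?eq_bits3 //= !product_state_bits3 /p_qubit.
by split; apply: complex_ext => /=; ring.
Qed.

(* alpha^2 + beta^2 = 1 and 2 gamma^2 = 1 make the gates unitary; the target
   dictates beta = sqrt 2 alpha and beta gamma = alpha. *)
Definition alpha : R := (Num.sqrt 3)^-1.
Definition beta : R := Num.sqrt 2 * alpha.
Definition gamma : R := (Num.sqrt 2)^-1.

Lemma alpha_gt0 : 0 < alpha.
Proof. by rewrite invr_gt0 sqrtr_gt0. Qed.

Lemma protocol_constants :
  [/\ alpha ^+ 2 + beta ^+ 2 = 1, gamma ^+ 2 = 2^-1 & beta * gamma = alpha].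
Proof.
have sqrt2_neq0 : Num.sqrt 2 != 0 :> R by rewrite sqrtr_eq0 -ltNge.
rewrite /beta /alpha /gamma exprMn !exprVn !sqr_sqrtr //; split.
- lra.
- by [].
- by rewrite mulrAC divff ?mul1r.
Qed.

Lemma valid_protocol : valid_ops (protocol alpha beta gamma).
Proof.
have [norm_ab half_g _] := protocol_constants; rewrite !expr2 in norm_ab half_g.
rewrite /=; split; [|split; [|split]] => //; apply: two_level_unitary;
  rewrite ?eq_bits3 //.
all: by apply: complex_ext => /=; nra.
Qed.

Lemma protocol_output p : in01 p ->
  let psi := run (protocol alpha beta gamma) (product_state (fun=> @p_qubit R) p) in
  psi b000 = alpha%:C * ((Num.sqrt 2 * p * Num.sqrt p) +i* (p * Num.sqrt (1 - p))) /\
  psi b100 = (alpha * ((1 + p) * Num.sqrt (1 - p)))%:C.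
Proof.
move=> /andP[p_ge0 p_le1] psi; rewrite /psi.
have [-> ->] := run_protocol alpha beta gamma p.
have [_ _ beta_gamma] := protocol_constants.
set s := Num.sqrt p; set t := Num.sqrt (1 - p).
have s2 : s ^+ 2 = p by rewrite sqr_sqrtr.
have t2 : t ^+ 2 = 1 - p by rewrite sqr_sqrtr ?subr_ge0.
rewrite [s ^+ 3]exprS [t ^+ 3]exprS s2 t2 -[2 * beta * gamma]mulrA beta_gamma /beta.
by split; apply: complex_ext => /=; ring.
Qed.

End ThreeQubitProtocol.

Section Target.
Variable R : realType.

Lemma sqrt_1_sub_sqr (p : R) : -1 <= p ->
  Num.sqrt (1 - p ^+ 2) = Num.sqrt (1 + p) * Num.sqrt (1 - p).
Proof. by move=> p_ge; rewrite -sqrtrM; [congr Num.sqrt; ring | lra]. Qed.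

Lemma eitheta_mul_p (p : R) : in01 p ->
  (Num.sqrt (1 + p))%:C * (eitheta p * p%:C) =
  (Num.sqrt 2 * p * Num.sqrt p) +i* (p * Num.sqrt (1 - p)).
Proof.
move=> /andP[p_ge0 p_le1]; rewrite /eitheta.
case: ifP => [/andP[p_gt0 p_lt1] | p_bd].
  rewrite sqrt_1_sub_sqr; last lra.
  rewrite sqrtrM // sqrtrV ?subr_ge0 //.
  set w := Num.sqrt (1 + p); set t := Num.sqrt (1 - p).
  have w2 : 1 + p = w ^+ 2 by rewrite sqr_sqrtr // addr_ge0.
  have w_gt0 : 0 < w by rewrite sqrtr_gt0; lra.
  have t_gt0 : 0 < t by rewrite sqrtr_gt0 subr_gt0.
  rewrite w2; apply: complex_ext => /=;
    by field; rewrite ?(gt_eqF w_gt0) ?(gt_eqF t_gt0) ?(gt_eqF p_gt0).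
have [->|p_neq0] := eqVneq p 0; first by apply: complex_ext => /=; ring.
have -> : p = 1.
  apply: le_anti; rewrite p_le1 leNgt; apply: contraFN p_bd => p_lt1.
  by rewrite p_lt1 lt_neqAle eq_sym p_neq0 p_ge0.
by rewrite subrr sqrtr0 sqrtr1; apply: complex_ext => /=; ring.
Qed.

Lemma target_normalized (p : R) : in01 p ->
  Normc.normc (eitheta p * p%:C) ^+ 2 + Normc.normc (Num.sqrt (1 - p ^+ 2))%:C ^+ 2 = 1.
Proof.
move=> p01; have /andP[p_ge0 p_le1] := p01.
move: (congr1 (fun z => Normc.normc z ^+ 2) (eitheta_mul_p p01)).
rewrite /= Normc.normcM exprMn -!complexr0 !normc_sqr.
rewrite !exprMn !sqr_sqrtr ?subr_ge0 ?exprn_ile1 //; last lra.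
set n := Normc.normc _ ^+ 2; rewrite expr0n !addr0 => h; nra.
Qed.

End Target.

Theorem mainTheorem4 (R : realType) :
  simulable (fun p : R => eitheta p * p%:C) (fun p : R => (Num.sqrt (1 - p ^+ 2))%:C).
Proof.
apply: (@Simulable_intro R _ _ 3 (fun=> @p_qubit R)
  (protocol (alpha R) (beta R) (gamma R)) ord0 (bits3 false false false)).
- exact: target_normalized.
- by left.
- exact: valid_protocol.
move=> p p01; rewrite !setbit_bits3; have [out0 out1] := protocol_output p01.
have [p_ge0 _] := andP p01.
have w_gt0 : 0 < Num.sqrt (1 + p) by rewrite sqrtr_gt0; lra.
exists (alpha R * Num.sqrt (1 + p))%:C; split.
  by rewrite fmorph_eq0 mulf_neq0 // gt_eqF ?alpha_gt0.
split; first by rewrite out0 rmorphM -[RHS]mulrA eitheta_mul_p.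
rewrite out1 sqrt_1_sub_sqr; last lra.
by rewrite -rmorphM -!mulrA [Num.sqrt _ * (_ * _)]mulrA -expr2 sqr_sqrtr //; lra.
Qed.
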